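(* Let $p\ge4$. There is a constant $c_p>0$ such that the following holds. Let $n_1,\dots,n_p\in\mathbb{Z}\setminus\{0\}$ with $|n_1|\ge|n_2|\ge\cdots\ge|n_p|$ and set $n=n_1+\cdots+n_p$. Then at least one of the following is true: (I) (resonance) $n_i=n$ for some $1\le i\le p$; (II) $n_1+n_2=0$; (III) $|n_3|\ge c_p|n_1|$; (IV) $|\Phi_p(n_1,\dots,n_p)|=|n^5-n_1^5-\cdots-n_p^5|\ge c_p\,n_1^4$; (V) $n_3^4|n_4|\ge c_p\,n_1^4$.
   Context: $\Phi_p(n_1,\dots,n_p)=n^5-\sum_{i=1}^pn_i^5$ where $n=\sum_{i=1}^pn_i$. The paper writes (III)–(V) with $\gtrsim$, i.e. up to an implicit constant; condition (II) is written as $n_1^*+n_2^*=0$, meaning the two frequencies of largest absolute value sum to zero, which under the stated ordering is $n_1+n_2=0$. *)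

(* Frequencies n_1..n_p are the entries s`_0 .. s`_(p-1)
   of a sequence s : seq int of size p (0-based indexing). *)
From HB Require Import structures.
From mathcomp Require Import all_boot all_order all_algebra.
From mathcomp Require Import reals.
Set Implicit Arguments. Unset Strict Implicit. Unset Printing Implicit Defensive.
Import Order.TTheory GRing.Theory Num.Theory.
Local Open Scope ring_scope.

Definition freq_sum (s : seq int) : int := \sum_(x <- s) x.

Definition Phi (s : seq int) : int := (freq_sum s) ^+ 5 - \sum_(x <- s) x ^+ 5.

(* Assume that (I) fails for n_1, and that (II), (III) and (V) fail, with
   1/c_p = K = 1000 (p - 2)^5.  Write a, b, t, u for n_1, ..., n_4, and r, E for
   the sums of n_i and of n_i^5 over i >= 4, so that |r| <= (p-3)|u| and
   |E| <= (p-3)|u|^5, while K|t| < |a| and K t^4 |u| < a^4.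
   If |a| <= 4|b|, then Phi is dominated by (a+b)^5 - a^5 - b^5 =
   5ab(a+b)(a^2+ab+b^2), which has size at least |a|^4 |a+b| >= |a|^4.
   If 4|b| <= |a|, put S = n - a = b + t + r, which is nonzero; then Phi is
   dominated by (a+S)^5 - a^5 - S^5, of size at least |a|^4 |S| >= |a|^4.  The
   only delicate error term is |b^5 + t^5| <= 5|b+t| b^4: either |b+t| <= 2|S|,
   or r cancels most of b + t, which forces |b| = O(p|t|) and b^4|u| = O(t^4|u|). *)

From HB Require Import structures.
From mathcomp Require Import all_boot all_order all_algebra.
From mathcomp Require Import reals.
From mathcomp Require Import lra ring.
Set Implicit Arguments.
Unset Strict Implicit.
Unset Printing Implicit Defensive.

Import Order.TTheory GRing.Theory Num.Theory.
Local Open Scope ring_scope.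

Lemma ler_norm_sum_const (R : numDomainType) (T : eqType) (v : seq T) (f : T -> R) (B : R) :
  (forall x, x \in v -> `|f x| <= B) -> `|\sum_(x <- v) f x| <= (size v)%:R * B.
Proof.
move=> fB; apply: le_trans (ler_norm_sum _ _ _) _.
rewrite big_seq (le_trans (ler_sum _ fB)) //.
by rewrite -big_seq big_const_seq count_predT iter_addr_0 mulr_natl.
Qed.

Lemma ler_norm_subrXX (R : numDomainType) (x y B : R) (n : nat) :
  `|x| <= B -> `|y| <= B -> `|x ^+ n - y ^+ n| <= n%:R * `|x - y| * B ^+ n.-1.
Proof.
move=> xB yB; rewrite subrXX normrM -mulrA mulrCA ler_wpM2l //.
apply: le_trans (ler_norm_sum _ _ _) _.
rewrite -[n in n%:R](card_ord n) mulr_natl -sumr_const ler_sum // => i _.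
have le_in : (i <= n.-1)%N by rewrite -ltnS (leq_trans (ltn_ord i)) // leqSpred.
have -> : B ^+ n.-1 = B ^+ (n.-1 - i) * B ^+ i by rewrite -exprD subnK.
have B_ge0 : 0 <= B := le_trans (normr_ge0 _) xB.
by rewrite normrM !normrX ler_pM ?exprn_ge0 // lerXn2r ?nnegrE.
Qed.

Lemma quintic_crossE (R : comPzRingType) (x y : R) :
  (x + y) ^+ 5 - x ^+ 5 - y ^+ 5 = 5 * x * y * (x + y) * (x ^+ 2 + x * y + y ^+ 2).
Proof. by ring. Qed.

Lemma expr4D_le (F : realFieldType) (x y : F) : (x + y) ^+ 4 <= 8 * (x ^+ 4 + y ^+ 4).
Proof.
have sq2 (v w : F) : (v + w) ^+ 2 <= 2 * (v ^+ 2 + w ^+ 2).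
  by have := sqr_ge0 (v - w); rewrite sqrrB sqrrD; lra.
have := sq2 x y; have := sq2 (x ^+ 2) (y ^+ 2); have := sqr_ge0 (x + y).
nra.
Qed.

Lemma quad_form_ge (F : realFieldType) (x y : F) : 3 / 4 * x ^+ 2 <= x ^+ 2 + x * y + y ^+ 2.
Proof. by have := sqr_ge0 (2 * y + x); nra. Qed.

Lemma quintic_cross_ge (F : realFieldType) (x y : F) :
  15 / 4 * `|x| ^+ 3 * `|y| * `|x + y| <= `|(x + y) ^+ 5 - x ^+ 5 - y ^+ 5|.
Proof.
have q_ge := quad_form_ge x y; rewrite -{1}(real_normK (num_real x)) in q_ge.
rewrite quintic_crossE !normrM normr_nat (ger0_norm (le_trans _ q_ge)); last first.
  by rewrite mulr_ge0 ?exprn_ge0 // divr_ge0.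
have -> : 15 / 4 * `|x| ^+ 3 * `|y| * `|x + y| =
  5 * `|x| * `|y| * `|x + y| * (3 / 4 * `|x| ^+ 2) by ring.
by rewrite ler_wpM2l // !mulr_ge0.
Qed.

Lemma quintic_cross_le (F : realFieldType) (x y : F) :
  `|(x + y) ^+ 5 - x ^+ 5 - y ^+ 5| <= 5 * `|x| * `|y| * (`|x| + `|y|) ^+ 3.
Proof.
have q_le : `|x ^+ 2 + x * y + y ^+ 2| <= (`|x| + `|y|) ^+ 2.
  have xy_le : x * y <= `|x| * `|y| by rewrite -normrM ler_norm.
  rewrite ger0_norm; last by apply: le_trans (quad_form_ge x y); rewrite mulr_ge0 ?sqr_ge0 // divr_ge0.
  have := mulr_ge0 (normr_ge0 x) (normr_ge0 y).
  by rewrite sqrrD mulr2n !real_normK ?num_real //; lra.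
rewrite quintic_crossE !normrM normr_nat exprS -!mulrA !ler_wpM2l //.
by rewrite ler_pM // ler_normD.
Qed.

Lemma lerB_normD3 (R : numDomainType) (V : normedZmodType R) (x y z w : V) :
  `|x| - (`|y| + `|z| + `|w|) <= `|x + y + z + w|.
Proof.
rewrite -!addrA; apply: le_trans (lerB_normD x (y + (z + w))).
rewrite lerD2l lerN2; apply: le_trans (ler_normD _ _) _.
by rewrite lerD2l ler_normD.
Qed.

Section PhiLowerBound.
Variables (F : realFieldType) (m K a b t u r E : F).
Hypotheses (m_ge0 : 0 <= m) (K_ge : 1000 * (m + 1) ^+ 5 <= K).
Hypotheses (le_ba : `|b| <= `|a|) (le_tb : `|t| <= `|b|) (le_ut : `|u| <= `|t|).
Hypotheses (le_r : `|r| <= m * `|u|) (le_E : `|E| <= m * `|u| ^+ 5).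
Hypotheses (le_Kt : K * `|t| <= `|a|) (le_Ktu : K * (`|t| ^+ 4 * `|u|) <= `|a| ^+ 4).

Let Y_ge1 : 1 <= (m + 1) ^+ 4.
Proof. by apply: exprn_ege1; rewrite lerDr. Qed.

Let K_ge_lin : 1000 * (m + 1) <= K.
Proof.
apply: le_trans K_ge; rewrite (exprS (m + 1) 4) mulrA ler_peMr //.
by rewrite mulr_ge0 // addr_ge0.
Qed.

Let K_ge0 : 0 <= K.
Proof. by apply: le_trans K_ge_lin; rewrite mulr_ge0 // addr_ge0. Qed.

Lemma Ku_le : K * `|u| <= `|a|.
Proof. by apply: le_trans le_Kt; rewrite ler_wpM2l. Qed.

Lemma KE_le : K * `|E| <= m * `|a| ^+ 4.
Proof.
have u4 : `|u| ^+ 4 <= `|t| ^+ 4 by rewrite lerXn2r ?nnegrE.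
apply: le_trans (ler_wpM2l K_ge0 le_E) _.
rewrite mulrCA ler_wpM2l //; apply: le_trans le_Ktu.
by rewrite ler_wpM2l // exprSr ler_wpM2r.
Qed.

Lemma Kcross_dt_le d : `|d| <= 2 * `|a| ->
  K * `|(d + t) ^+ 5 - d ^+ 5 - t ^+ 5| <= 135 * (`|a| ^+ 4 * `|d|).
Proof.
move=> le_d; have le_ta := le_trans le_tb le_ba.
have le_s : (`|d| + `|t|) ^+ 3 <= (3 * `|a|) ^+ 3.
  by rewrite lerXn2r ?nnegrE ?addr_ge0 ?mulr_ge0 //; move: le_d le_ta; lra.
apply: le_trans (ler_wpM2l K_ge0 (quintic_cross_le d t)) _.
have -> : K * (5 * `|d| * `|t| * (`|d| + `|t|) ^+ 3) =
  5 * `|d| * (K * `|t| * (`|d| + `|t|) ^+ 3) by ring.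
have -> : 135 * (`|a| ^+ 4 * `|d|) = 5 * `|d| * (`|a| * (3 * `|a|) ^+ 3) by ring.
by rewrite ler_wpM2l ?mulr_ge0 // ler_pM ?mulr_ge0 ?exprn_ge0 ?addr_ge0.
Qed.

Lemma Kshift_r_le d : `|d| <= 2 * `|a| ->
  K * `|(d + t + r) ^+ 5 - (d + t) ^+ 5|
    <= 40 * m * (8 * (`|a| ^+ 4 * `|d|) + (m + 1) ^+ 4 * `|a| ^+ 4).
Proof.
move=> le_d; have le_rt := le_trans le_r (ler_wpM2l m_ge0 le_ut).
have mt_ge0 : 0 <= m * `|t| by rewrite mulr_ge0.
set B := `|d| + (m + 1) * `|t|.
have B_ge0 : 0 <= B by rewrite addr_ge0 ?mulr_ge0 ?addr_ge0.
have le_dt : `|d + t| <= B.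
  by apply: le_trans (ler_normD _ _) _; rewrite /B; move: mt_ge0; lra.
have le_dtr : `|d + t + r| <= B.
  apply: le_trans (ler_normD _ _) _; apply: le_trans (lerD (ler_normD _ _) le_rt) _.
  by rewrite /B; lra.
have := ler_norm_subrXX 5 le_dtr le_dt; rewrite [d + t + r]addrC addrK /= => le_diff.
have le_B4 : B ^+ 4 <= 8 * (`|d| ^+ 4 + (m + 1) ^+ 4 * `|t| ^+ 4).
  by rewrite -exprMn; apply: expr4D_le.
have Kud : K * `|u| * `|d| ^+ 4 <= 8 * (`|a| ^+ 4 * `|d|).
  have le_d3 : `|d| ^+ 3 <= (2 * `|a|) ^+ 3 by rewrite lerXn2r ?nnegrE ?mulr_ge0.
  have -> : 8 * (`|a| ^+ 4 * `|d|) = `|a| * ((2 * `|a|) ^+ 3 * `|d|) by ring.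
  by rewrite exprSr ler_pM ?mulr_ge0 ?exprn_ge0 ?addr_ge0 ?Ku_le ?ler_wpM2r.
have Kut : K * `|u| * `|t| ^+ 4 <= `|a| ^+ 4 by rewrite mulrAC -mulrA.
apply: le_trans (ler_wpM2l K_ge0 le_diff) _.
apply: le_trans (_ : K * (5 * (m * `|u|) * (8 * (`|d| ^+ 4 + (m + 1) ^+ 4 * `|t| ^+ 4))) <= _).
  by rewrite ler_wpM2l // ler_pM ?mulr_ge0 ?exprn_ge0 ?ler_wpM2l.
have -> : K * (5 * (m * `|u|) * (8 * (`|d| ^+ 4 + (m + 1) ^+ 4 * `|t| ^+ 4))) =
  40 * m * (K * `|u| * `|d| ^+ 4 + (m + 1) ^+ 4 * (K * `|u| * `|t| ^+ 4)) by ring.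
by rewrite ler_wpM2l ?mulr_ge0 // lerD // ler_wpM2l ?exprn_ge0 ?addr_ge0.
Qed.

(* [b ^+ 5 - (- t) ^+ 5] is [b ^+ 5 + t ^+ 5], in the shape of [ler_norm_subrXX]. *)
Lemma Kpow5_bt_le : 4 * `|b| <= `|a| ->
  K * `|b ^+ 5 - (- t) ^+ 5|
    <= 10 / 256 * K * (`|a| ^+ 4 * `|b + t + r|) + 160 * m * (m + 1) ^+ 4 * `|a| ^+ 4.
Proof.
move=> le_ba4.
have := ler_norm_subrXX 5 (lexx `|b|) (_ : `|- t| <= `|b|).
rewrite normrN opprK /= => /(_ le_tb) le_bt.
apply: le_trans (ler_wpM2l K_ge0 le_bt) _.
have [le_S | gt_S] := lerP `|b + t| (2 * `|b + t + r|).
- apply: ler_wpDr; first by rewrite !mulr_ge0 ?exprn_ge0 ?addr_ge0.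
  have b4 : `|b| ^+ 4 <= `|a| ^+ 4 / 256.
    have -> : `|a| ^+ 4 / 256 = (`|a| / 4) ^+ 4 by field.
    by rewrite lerXn2r ?nnegrE ?divr_ge0 //; lra.
  apply: le_trans (_ : K * (5 * (2 * `|b + t + r|) * (`|a| ^+ 4 / 256)) <= _).
    by rewrite ler_wpM2l // ler_pM ?mulr_ge0 ?exprn_ge0 // ler_wpM2l.
  by rewrite le_eqVlt; apply/orP; left; apply/eqP; field.
- apply: ler_wpDl; first by rewrite !mulr_ge0 ?exprn_ge0 ?invr_ge0 ?K_ge0.
  have le_btr : `|b + t| <= 2 * (m * `|u|).
    by have := ler_normB (b + t + r) r; rewrite addrK; move: gt_S le_r; lra.
  have le_b : `|b| <= 2 * (m + 1) * `|t|.
    have := ler_normB (b + t) t; rewrite addrK.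
    by move: le_btr (ler_wpM2l m_ge0 le_ut) (normr_ge0 t); lra.
  have b4 : `|b| ^+ 4 <= 16 * (m + 1) ^+ 4 * `|t| ^+ 4.
    have -> : 16 * (m + 1) ^+ 4 * `|t| ^+ 4 = (2 * (m + 1) * `|t|) ^+ 4 by ring.
    by rewrite lerXn2r ?nnegrE ?mulr_ge0 ?addr_ge0.
  apply: le_trans (_ : K * (5 * (2 * (m * `|u|)) * (16 * (m + 1) ^+ 4 * `|t| ^+ 4)) <= _).
    by rewrite ler_wpM2l // ler_pM ?mulr_ge0 ?exprn_ge0 ?addr_ge0 // ler_wpM2l.
  have -> : K * (5 * (2 * (m * `|u|)) * (16 * (m + 1) ^+ 4 * `|t| ^+ 4)) =
    160 * m * (m + 1) ^+ 4 * (K * (`|t| ^+ 4 * `|u|)) by ring.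
  by rewrite ler_wpM2l ?mulr_ge0 ?exprn_ge0 ?addr_ge0.
Qed.

Local Notation phi := ((a + b + t + r) ^+ 5 - a ^+ 5 - b ^+ 5 - t ^+ 5 - E).

Lemma phi_ge_comparable : `|a| <= 4 * `|b| -> 1 <= `|a + b| -> `|a| ^+ 4 <= K * `|phi|.
Proof.
move=> le_ab d_ge1; set X := `|a| ^+ 4; set D := `|a + b|.
have le_d : D <= 2 * `|a| by apply: le_trans (ler_normD _ _) _; move: le_ba; lra.
have phiE : phi = ((a + b) ^+ 5 - a ^+ 5 - b ^+ 5) + ((a + b + t) ^+ 5 - (a + b) ^+ 5 - t ^+ 5)
  + ((a + b + t + r) ^+ 5 - (a + b + t) ^+ 5) + - E by ring.
have main : 15 / 16 * (X * D) <= `|(a + b) ^+ 5 - a ^+ 5 - b ^+ 5|.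
  apply: le_trans (quintic_cross_ge a b).
  have -> : 15 / 16 * (X * D) = 15 / 4 * `|a| ^+ 3 * (`|a| / 4) * D by rewrite /X; field.
  apply: ler_wpM2r; first exact: normr_ge0.
  by rewrite ler_wpM2l ?mulr_ge0 ?exprn_ge0 //; lra.
have := lerB_normD3 ((a + b) ^+ 5 - a ^+ 5 - b ^+ 5) ((a + b + t) ^+ 5 - (a + b) ^+ 5 - t ^+ 5)
  ((a + b + t + r) ^+ 5 - (a + b + t) ^+ 5) (- E).
rewrite normrN -phiE => tri.
have := ler_wpM2l K_ge0 tri; have := ler_wpM2l K_ge0 main.
have := Kcross_dt_le le_d; have := Kshift_r_le le_d; have := KE_le.
have X_ge0 : 0 <= X by rewrite exprn_ge0.
have coef : 1 + 40 * m * (m + 1) ^+ 4 + m <= 15 / 16 * K - 135 - 320 * m.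
  by move: K_ge; rewrite (exprS (m + 1) 4); move: m_ge0 Y_ge1; nra.
have := ler_wpM2r X_ge0 coef.
have c_ge0 : 0 <= 15 / 16 * K - 135 - 320 * m.
  by apply: le_trans coef; rewrite !addr_ge0 ?mulr_ge0 ?exprn_ge0 ?addr_ge0.
have := ler_wpM2l c_ge0 (ler_peMr X_ge0 d_ge1).
rewrite -/X -/D; lra.
Qed.

Lemma phi_ge_dominant : 4 * `|b| <= `|a| -> 1 <= `|b + t + r| -> `|a| ^+ 4 <= K * `|phi|.
Proof.
move=> le_ba4 S_ge1; set X := `|a| ^+ 4; set S := b + t + r.
have le_S : `|S| <= `|a| / 2.
  have := le_trans (ler_wpM2r (normr_ge0 t) K_ge_lin) le_Kt.
  have := ler_normD (b + t) r; have := ler_normD b t.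
  by move: le_ba4 le_r (ler_wpM2l m_ge0 le_ut) (mulr_ge0 m_ge0 (normr_ge0 t)); lra.
have phiE : phi = ((a + S) ^+ 5 - a ^+ 5 - S ^+ 5) + S ^+ 5 + - (b ^+ 5 - (- t) ^+ 5) + - E.
  by rewrite /S; ring.
have main : 15 / 8 * (X * `|S|) <= `|(a + S) ^+ 5 - a ^+ 5 - S ^+ 5|.
  apply: le_trans (quintic_cross_ge a S).
  have -> : 15 / 8 * (X * `|S|) = 15 / 4 * `|a| ^+ 3 * `|S| * (`|a| / 2) by rewrite /X; field.
  apply: ler_wpM2l; first by rewrite !mulr_ge0 ?exprn_ge0 ?invr_ge0.
  by have := lerB_normD a S; move: le_S; lra.
have S5 : `|S ^+ 5| <= X * `|S| / 16.
  have -> : X * `|S| / 16 = (`|a| / 2) ^+ 4 * `|S| by rewrite /X; field.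
  by rewrite normrX exprSr ler_wpM2r // lerXn2r ?nnegrE ?divr_ge0.
have := lerB_normD3 ((a + S) ^+ 5 - a ^+ 5 - S ^+ 5) (S ^+ 5) (- (b ^+ 5 - (- t) ^+ 5)) (- E).
rewrite !normrN -phiE => tri.
have := ler_wpM2l K_ge0 tri; have := ler_wpM2l K_ge0 main; have := ler_wpM2l K_ge0 S5.
have := Kpow5_bt_le le_ba4; have := KE_le.
have X_ge0 : 0 <= X by rewrite exprn_ge0.
have coef : 1 + 160 * m * (m + 1) ^+ 4 + m <= K * (15 / 8 - 1 / 16 - 10 / 256).
  by move: K_ge; rewrite (exprS (m + 1) 4); move: m_ge0 Y_ge1; nra.
have c_ge0 : 0 <= K * (15 / 8 - 1 / 16 - 10 / 256).
  by apply: le_trans coef; rewrite !addr_ge0 ?mulr_ge0 ?exprn_ge0 ?addr_ge0.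
have := ler_wpM2r X_ge0 coef; have := ler_wpM2l c_ge0 (ler_peMr X_ge0 S_ge1).
rewrite -/X -/S; lra.
Qed.

Lemma phi_ge : 1 <= `|a + b| -> 1 <= `|b + t + r| -> `|a| ^+ 4 <= K * `|phi|.
Proof.
move=> d_ge1 S_ge1; have [le_ab | /ltW lt_ab] := lerP `|a| (4 * `|b|).
  exact: phi_ge_comparable.
exact: phi_ge_dominant.
Qed.

End PhiLowerBound.

Lemma norm_expr4 (R : realDomainType) (x : R) : `|x| ^+ 4 = x ^+ 4.
Proof. by rewrite -normrX ger0_norm // exprn_even_ge0. Qed.

Lemma intr_norm_ge1 (R : numDomainType) (z : int) : z != 0 -> 1 <= `|z%:~R : R|.
Proof. by rewrite -intr_norm ler1z -gtz0_ge1 normr_gt0. Qed.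

Lemma freq_sum_cons3 (a b t : int) (v : seq int) :
  freq_sum [:: a, b, t & v] = a + (b + t + \sum_(x <- v) x).
Proof. by rewrite /freq_sum !big_cons !addrA. Qed.

Lemma Phi_cons3 (a b t : int) (v : seq int) :
  Phi [:: a, b, t & v] =
  (a + b + t + \sum_(x <- v) x) ^+ 5 - a ^+ 5 - b ^+ 5 - t ^+ 5 - \sum_(x <- v) x ^+ 5.
Proof. by rewrite /Phi freq_sum_cons3 !big_cons; ring. Qed.

Lemma intrX (R : pzRingType) (x : int) (n : nat) : (x ^+ n)%:~R = x%:~R ^+ n :> R.
Proof. exact: rmorphXn. Qed.

Lemma intr_sum (R : pzRingType) (I : Type) (r : seq I) (f : I -> int) :
  (\sum_(i <- r) f i)%:~R = \sum_(i <- r) (f i)%:~R :> R.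
Proof. exact: rmorph_sum. Qed.

Lemma intr_Phi_ge (R : realFieldType) (m K : R) (a b t u : int) (v : seq int) :
  m = (size v)%:R -> 1000 * (m + 1) ^+ 5 <= K ->
  `|b| <= `|a| -> `|t| <= `|b| -> `|u| <= `|t| -> (forall x, x \in v -> `|x| <= `|u|) ->
  b + t + \sum_(x <- v) x != 0 -> a + b != 0 ->
  K * (`|t|)%:~R <= (`|a|)%:~R -> K * (t ^+ 4 * `|u|)%:~R <= (a ^+ 4)%:~R ->
  (a ^+ 4)%:~R <= K * (`|Phi [:: a, b, t & v]|)%:~R.
Proof.
move=> m_size K_ge ba tb ut le_v S_ne d_ne le_Kt le_Ktu.
have le_v' x : x \in v -> `|x%:~R : R| <= `|u%:~R| by move/le_v; rewrite -!intr_norm ler_int.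
rewrite intr_norm Phi_cons3 !(intrB, intrD, intrX, intr_sum) -norm_expr4.
apply: (phi_ge (m := m) (u := u%:~R)) => //.
- by rewrite m_size ler0n.
- by rewrite -!intr_norm ler_int.
- by rewrite -!intr_norm ler_int.
- by rewrite -!intr_norm ler_int.
- by rewrite m_size; apply: ler_norm_sum_const.
- rewrite m_size; apply: ler_norm_sum_const => x /le_v' le_x.
  by rewrite intrX normrX lerXn2r ?nnegrE.
- by rewrite -!intr_norm.
- by rewrite !norm_expr4 -!intrX -intr_norm -intrM.
- by rewrite -intrD intr_norm_ge1.
- by rewrite -intr_sum -!intrD intr_norm_ge1.
Qed.

Theorem proposition3p2 (R : realType) (p : nat) (hp : (4 <= p)%N) :
  exists c : R, 0 < c /\
  forall s : seq int,
    size s = p ->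
    all (fun x => x != 0) s ->
    (forall i j : nat, (i <= j)%N -> (j < p)%N -> `|s`_j| <= `|s`_i|) ->
    (exists i : nat, (i < p)%N /\ s`_i = freq_sum s) \/
    s`_0 + s`_1 = 0 \/
    c * (`|s`_0|)%:~R <= (`|s`_2|)%:~R \/
    c * (s`_0 ^+ 4)%:~R <= (`|Phi s|)%:~R \/
    c * (s`_0 ^+ 4)%:~R <= (s`_2 ^+ 4 * `|s`_3|)%:~R.
Proof.
pose m : R := (p - 3)%:R; pose K : R := 1000 * (m + 1) ^+ 5.
have K_gt0 : 0 < K by rewrite mulr_gt0 // exprn_gt0 // ltr_wpDl.
exists K^-1; split=> [|s]; first by rewrite invr_gt0.
case: s => [|a [|b [|t [|u w]]]] size_s _ sorted_s; try by move: hp; rewrite -size_s.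
set v := u :: w in size_s sorted_s *.
have [n_eq | n_ne] := eqVneq (freq_sum [:: a, b, t & v]) a.
  by left; exists 0%N; rewrite -size_s.
right; have [|ab_ne] := eqVneq (a + b) 0; [by left | right].
have [|/ltW le_Kt] := leP (K^-1 * (`|a|)%:~R) (`|t|)%:~R; [by left | right].
have [|/ltW le_Ktu] := leP (K^-1 * (a ^+ 4)%:~R) (t ^+ 4 * `|u|)%:~R; [by right | left].
rewrite ler_pdivlMl // in le_Kt; rewrite ler_pdivlMl // in le_Ktu.
rewrite ler_pdivrMl //.
have lt_p j : (j < 4)%N -> (j < p)%N by move/leq_trans; apply.
apply: (intr_Phi_ge (m := m) (u := u)) => //.
- by rewrite /m -size_s.
- exact: sorted_s 0%N 1%N isT (lt_p 1%N isT).
- exact: sorted_s 1%N 2%N isT (lt_p 2%N isT).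
- exact: sorted_s 2%N 3%N isT (lt_p 3%N isT).
- move=> x xv; rewrite -(nth_index 0 xv); apply: (sorted_s 3%N (index x v).+3) => //.
  by rewrite -size_s; move: xv; rewrite -index_mem.
- by apply: contra_neq n_ne; rewrite freq_sum_cons3 => ->; rewrite addr0.
Qed.
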